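(* Let $n\ge1$ be an integer with binary expansion $n=\sum_{k=0}^{K}2^{L_k}$, $L_0>L_1>\dots>L_K\ge0$. Define the probability distribution on $\{L_0,\dots,L_K\}$ by $\Pr(L=L_k)=2^{L_k}/n$. Then its Shannon entropy satisfies $H(L)\le 2$ bits.
   Context: Entropy is measured in bits ($\log_2$). *)

From Stdlib Require Import Reals Lra Lia List Arith.
Open Scope R_scope.

Definition log2R (x : R) : R := ln x / ln 2.

Definition entropy_bits (ps : list R) : R :=
  fold_right (fun p acc => - (p * log2R p) + acc) 0 ps.

Definition bin_exps (n : nat) : list nat :=
  filter (fun k => Nat.testbit n k) (seq 0 (S (Nat.log2 n))).

Definition binProb (n k : nat) : R := 2 ^ k / INR n.

(* Write n = sum_k 2^{L_k}, let M = floor(log2 n) and p_k = 2^{L_k}/n.  Since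
   -p_k log2 p_k = p_k (log2 n - L_k) and log2 n <= M + 1, the entropy is at
   most ((M + 1) n - W(n)) / n, where W(n) = sum_k L_k 2^{L_k}.  So it suffices
   to show the purely arithmetic bound (M + 1) n - W(n) <= 2n - (M + 1). *)

From Stdlib Require Import Reals List Arith Lra Lia.
Open Scope R_scope.
Import ListNotations.

Lemma div_le_of_le_mul (a b d : R) : 0 < d -> a <= b * d -> a / d <= b.
Proof.
  intros Hd Hab. apply (Rmult_le_reg_r d); [exact Hd|].
  unfold Rdiv. rewrite Rmult_assoc, Rinv_l by lra. lra.
Qed.

Fixpoint pow2_sum (l : list nat) : R :=
  match l with [] => 0 | k :: t => 2 ^ k + pow2_sum t end.

Fixpoint weighted_pow2_sum (l : list nat) : R :=
  match l with [] => 0 | k :: t => 2 ^ k * INR k + weighted_pow2_sum t end.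

Lemma pow2_sum_shift (l : list nat) : pow2_sum (map S l) = 2 * pow2_sum l.
Proof. induction l as [|k l IH]; simpl; [lra|]. rewrite IH. lra. Qed.

Lemma weighted_pow2_sum_shift (l : list nat) :
  weighted_pow2_sum (map S l) = 2 * weighted_pow2_sum l + 2 * pow2_sum l.
Proof.
  induction l as [|k l IH]; cbn [map weighted_pow2_sum pow2_sum]; [lra|].
  rewrite IH, S_INR. simpl. lra.
Qed.

Lemma div2_decomp (n : nat) : n = (2 * Nat.div2 n + Nat.b2n (Nat.odd n))%nat.
Proof. pose proof (Nat.div2_odd n). lia. Qed.

Lemma INR_div2_decomp (n : nat) :
  INR n = 2 * INR (Nat.div2 n) + INR (Nat.b2n (Nat.odd n)).
Proof. rewrite (div2_decomp n) at 1. rewrite plus_INR, mult_INR. simpl. lra. Qed.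

Lemma log2_div2 (n : nat) : (2 <= n)%nat ->
  (1 <= Nat.div2 n)%nat /\ Nat.log2 n = S (Nat.log2 (Nat.div2 n)).
Proof.
  intros Hn. pose proof (div2_decomp n) as E.
  assert (Hm : (1 <= Nat.div2 n)%nat) by (destruct (Nat.odd n); simpl in E; lia).
  split; [exact Hm|]. rewrite E at 1.
  destruct (Nat.odd n); simpl Nat.b2n.
  - apply Nat.log2_succ_double; lia.
  - rewrite Nat.add_0_r. apply Nat.log2_double; lia.
Qed.

Lemma binary_ind (P : nat -> Prop) :
  P 1%nat -> (forall n, (2 <= n)%nat -> P (Nat.div2 n) -> P n) ->
  forall n, (1 <= n)%nat -> P n.
Proof.
  intros H1 Hstep n. induction n as [n IH] using (well_founded_induction lt_wf).
  intros Hn. destruct (Nat.eq_dec n 1) as [->|Hn1]; [exact H1|].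
  apply Hstep; [lia|]. apply IH; [apply Nat.lt_div2; lia|].
  apply (log2_div2 n); lia.
Qed.

Lemma bin_exps_div2 (n : nat) : (2 <= n)%nat ->
  bin_exps n = (if Nat.odd n then [0%nat] else []) ++ map S (bin_exps (Nat.div2 n)).
Proof.
  intros Hn. unfold bin_exps. rewrite (proj2 (log2_div2 n Hn)).
  change (seq 0 (S (S (Nat.log2 (Nat.div2 n)))))
    with (0%nat :: seq 1 (S (Nat.log2 (Nat.div2 n)))).
  rewrite <- seq_shift. cbn [filter]. change (Nat.testbit n 0) with (Nat.odd n).
  assert (Hshift : forall l, filter (fun k => Nat.testbit n k) (map S l)
      = map S (filter (fun k => Nat.testbit (Nat.div2 n) k) l)).
  { induction l as [|k l IH]; simpl; [reflexivity|].
    rewrite Nat.testbit_div2. destruct (Nat.testbit n (S k)); simpl; now rewrite IH. }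
  rewrite Hshift. destruct (Nat.odd n); reflexivity.
Qed.

Lemma pow2_sum_bin_exps (n : nat) : (1 <= n)%nat -> pow2_sum (bin_exps n) = INR n.
Proof.
  revert n. refine (binary_ind _ _ _); [vm_compute bin_exps; simpl; lra|].
  intros n Hn IH. rewrite bin_exps_div2 by exact Hn.
  rewrite (INR_div2_decomp n).
  destruct (Nat.odd n); simpl; rewrite pow2_sum_shift, IH; simpl; lra.
Qed.

(* Passing from m = n/2 to n = 2m + b, the
   left side becomes twice its value at m plus b (M(m) + 2). *)
Lemma weighted_sum_bound (n : nat) : (1 <= n)%nat ->
  (INR (Nat.log2 n) + 1) * INR n - weighted_pow2_sum (bin_exps n)
    <= 2 * INR n - (INR (Nat.log2 n) + 1).
Proof.
  revert n. refine (binary_ind _ _ _); [vm_compute bin_exps; simpl; lra|].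
  intros n Hn IH. destruct (log2_div2 n Hn) as [Hm Hlog].
  pose proof (pow2_sum_bin_exps _ Hm) as HS.
  rewrite bin_exps_div2, Hlog, S_INR by exact Hn.
  rewrite (INR_div2_decomp n).
  pose proof (pos_INR (Nat.log2 (Nat.div2 n))) as HM.
  destruct (Nat.odd n); simpl in *;
    rewrite ?weighted_pow2_sum_shift, HS; simpl; nra.
Qed.

Lemma log2R_le_log2_succ (n : nat) : (1 <= n)%nat ->
  log2R (INR n) <= INR (Nat.log2 n) + 1.
Proof.
  intros Hn. assert (Hln2 : 0 < ln 2) by (pose proof ln_lt_2; lra).
  destruct (Nat.log2_spec n) as [_ Hlt]; [lia|].
  apply lt_INR in Hlt. rewrite pow_INR in Hlt. change (INR 2) with 2 in Hlt.
  assert (Hln : ln (INR n) < ln (2 ^ S (Nat.log2 n)))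
    by (apply ln_increasing; [apply lt_0_INR; lia | exact Hlt]).
  rewrite ln_pow, S_INR in Hln by lra.
  unfold log2R. apply div_le_of_le_mul; lra.
Qed.

Lemma binProb_entropy_term (n k : nat) : (1 <= n)%nat ->
  - (binProb n k * log2R (binProb n k)) = binProb n k * (log2R (INR n) - INR k).
Proof.
  intros Hn. assert (Hn' : 0 < INR n) by (apply lt_0_INR; lia).
  assert (Hln2 : 0 < ln 2) by (pose proof ln_lt_2; lra).
  unfold binProb, log2R, Rdiv.
  rewrite ln_mult, ln_Rinv, ln_pow by (try apply Rinv_0_lt_compat; try apply pow_lt; lra).
  field. lra.
Qed.

Lemma entropy_binProb_bound (n : nat) (c : R) (l : list nat) :
  (1 <= n)%nat -> log2R (INR n) <= c ->
  entropy_bits (map (binProb n) l) <= (c * pow2_sum l - weighted_pow2_sum l) / INR n.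
Proof.
  intros Hn Hc. assert (Hn' : 0 < INR n) by (apply lt_0_INR; lia).
  induction l as [|k l IH]; simpl; [unfold Rdiv; lra|].
  rewrite binProb_entropy_term by exact Hn.
  assert (Hp : 0 <= binProb n k).
  { unfold binProb. left. apply Rdiv_lt_0_compat; [apply pow_lt; lra | exact Hn']. }
  assert (Hterm : binProb n k * (log2R (INR n) - INR k) <= binProb n k * (c - INR k))
    by (apply Rmult_le_compat_l; lra).
  assert (Hsplit : (c * (2 ^ k + pow2_sum l) - (2 ^ k * INR k + weighted_pow2_sum l)) / INR n
      = binProb n k * (c - INR k) + (c * pow2_sum l - weighted_pow2_sum l) / INR n)
    by (unfold binProb; field; lra).
  lra.
Qed.

Theorem mainTheorem3 (n : nat) (hn : (1 <= n)%nat) :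
  entropy_bits (map (binProb n) (bin_exps n)) <= 2.
Proof.
  set (M := INR (Nat.log2 n)).
  assert (Hn : 0 < INR n) by (apply lt_0_INR; lia).
  eapply Rle_trans.
  { apply (entropy_binProb_bound n (M + 1)); [exact hn | apply log2R_le_log2_succ, hn]. }
  rewrite pow2_sum_bin_exps by exact hn.
  pose proof (weighted_sum_bound n hn) as HW. fold M in HW.
  pose proof (pos_INR (Nat.log2 n)) as HM. fold M in HM.
  apply div_le_of_le_mul; lra.
Qed.
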